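(* Let $G,H$ be locally compact second countable unimodular groups and $(\Omega,\mu)$ a $(G,H)$-coupling with associated maps $i\colon G\times Y\to\Omega$, $j\colon H\times X\to\Omega$. Then the associated cocycles $\omega_H\colon G\times X\to H$ and $\omega_G\colon H\times Y\to G$ are (essentially) locally bounded Borel maps.
   Context: A Borel map is locally bounded if it maps relatively compact sets to relatively compact sets. A $(G,H)$-coupling is a standard Borel measure space $(\Omega,\mu)$ (standard meaning: Borel isomorphic, via a map $\varphi$ with $\varphi,\varphi^{-1}$ locally bounded, onto a closed subset of $\mathbb{R}\sqcup\mathbb{Z}$ with $\varphi_*\mu$ equivalent to Lebesgue+counting measure on the range) with a locally bounded Borel action of $G\times H$, and measure preserving Borel isomorphisms $i\colon (G,\lambda_G)\times(Y,\mu_Y)\to\Omega$, $j\colon (H,\lambda_H)\times(X,\mu_X)\to\Omega$ with $X,Y$ standard and $0<\mu_X(X),\mu_Y(Y)<\infty$, such that $i,i^{-1},j,j^{-1}$ are locally bounded and essentially $G$- resp. $H$-equivariant ($i(g_0g,y)=g_0.i(g,y)$ for a.e. $y$ and all $g_0,g$; analogously for $j$). The induced $G$-action on $X$ is defined (a.e.) by $g.j(H\times\{x\})=j(H\times\{g.x\})$, and similarly $H$ acts on $Y$. The cocycle $\omega_H$ is defined by $g.j(h,x)=j(h\,\omega_H(g,x)^{-1},g.x)$ for a.e. $x\in X$ and all $h\in H$ (and set to the identity on a null set), and $\omega_G$ by $h.i(g,y)=i(g\,\omega_G(h,y)^{-1},h.y)$ for a.e. $y\in Y$ and all $g\in G$.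 *)

From mathcomp Require Import all_boot all_order all_algebra.
From mathcomp Require Import all_classical all_reals all_analysis.
Import Order.TTheory GRing.Theory Num.Theory.
Import numFieldNormedType.Exports.
Set Implicit Arguments. Unset Strict Implicit. Unset Printing Implicit Defensive.
Local Open Scope classical_set_scope.
Local Open Scope ring_scope.

Section Defs.
Variable R : realType.

Definition borelS (T : topologicalType) : set (set T) := <<s @open T >>.

Definition prod_borelS (T U : topologicalType) : set (set (T * U)) :=
  <<s [set C | exists A B, borelS A /\ borelS B /\ C = A `*` B] >>.

Definition borel_map (T U : topologicalType) (f : T -> U) :=
  forall B, borelS B -> borelS (f @^-1` B).
Definition borel_map2 (T1 T2 U : topologicalType) (f : T1 * T2 -> U) :=
  forall B, borelS B -> prod_borelS (f @^-1` B).

Definition locally_bounded (T U : topologicalType) (f : T -> U) :=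
  forall A, precompact A -> precompact (f @` A).

Definition borel_measure (T : topologicalType) (mu : set T -> \bar R) :=
  [/\ mu set0 = 0%E,
      (forall A, borelS A -> (0 <= mu A)%E) &
      (forall F : nat -> set T, (forall n, borelS (F n)) -> trivIset setT F ->
         (fun n => \sum_(0 <= k < n) mu (F k))%E @ \oo --> mu (\bigcup_n F n))].

Definition mu_null (T : topologicalType) (mu : set T -> \bar R) (N : set T) :=
  exists2 B, borelS B & N `<=` B /\ mu B = 0%E.

Definition lcsc_group (G : topologicalType) (mul : G -> G -> G) (inv : G -> G)
    (one : G) :=
  [/\ (forall x y z, mul x (mul y z) = mul (mul x y) z),
      (forall x, mul one x = x /\ mul x one = x),
      (forall x, mul (inv x) x = one /\ mul x (inv x) = one),
      continuous (fun p : G * G => mul p.1 p.2) /\ continuous inv &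
      [/\ hausdorff_space G, locally_compact [set: G] & @second_countable G]].

(** [lam] is a Haar measure on G (nonzero, left invariant, finite on compacts)
    and G is unimodular (the Haar measure is also right invariant). *)
Definition unimodular_haar (G : topologicalType) (mul : G -> G -> G)
    (lam : set G -> \bar R) :=
  [/\ borel_measure lam,
      (forall K, compact K -> (lam K < +oo)%E),
      (exists2 A, borelS A & (0 < lam A)%E),
      (forall g A, borelS A -> lam (mul g @` A) = lam A) &
      (forall g A, borelS A -> lam ((fun x => mul x g) @` A) = lam A)].

(** The model space R ⊔ Z, encoded as [R + int]; its relatively compact,
    closed and Borel sets, and the measure class of Lebesgue + counting. *)
Definition RZ_R (S : set (R + int)) : set R := [set r | S (inl r)].
Definition RZ_Z (S : set (R + int)) : set int := [set z | S (inr z)].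
Definition RZ_relcompact (S : set (R + int)) :=
  (exists M : R, forall r, RZ_R S r -> `|r| <= M) /\ finite_set (RZ_Z S).
Definition RZ_closed (S : set (R + int)) := closed (RZ_R S).
Definition RZ_borel (S : set (R + int)) := measurable (RZ_R S).
Definition RZ_null (S : set (R + int)) :=
  lebesgue_measure (RZ_R S) = 0%E /\ RZ_Z S = set0.

(** Standard measure space: a Borel isomorphism [phi] onto a closed subset of
    R ⊔ Z with [phi], [phi^-1] locally bounded, such that [phi_* mu] is
    equivalent to (Lebesgue + counting) restricted to the range. *)
Definition standard (T : topologicalType) (mu : set T -> \bar R) :=
  borel_measure mu /\
  exists phi : T -> R + int,
  [/\ injective phi /\ RZ_closed (range phi),
      (forall S, RZ_borel S -> borelS (phi @^-1` S)) /\
      (forall A, borelS A -> RZ_borel (phi @` A)),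
      (forall A, precompact A -> RZ_relcompact (phi @` A)),
      (forall S, RZ_relcompact S -> precompact (phi @^-1` S)) &
      (forall A, borelS A -> (mu A = 0%E <-> RZ_null (phi @` A)))].

Definition lb_borel_iso (T1 T2 U : topologicalType) (f : T1 * T2 -> U) :=
  exists f' : U -> T1 * T2,
  [/\ cancel f f' /\ cancel f' f, borel_map2 f,
      (forall B, prod_borelS B -> borelS (f' @^-1` B)),
      locally_bounded f & locally_bounded f'].

(** measure preserving from (lam x nu) to mu (tested on Borel rectangles,
    which determines the product measure). *)
Definition meas_pres (T1 T2 U : topologicalType) (f : T1 * T2 -> U)
    (lam : set T1 -> \bar R) (nu : set T2 -> \bar R) (mu : set U -> \bar R) :=
  forall A B, borelS A -> borelS B -> mu (f @` (A `*` B)) = (lam A * nu B)%E.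

(** (G,H)-coupling data. [aG], [aH] are the actions of G and H on Omega
    (together they form the action of G x H: (g,h).w = aG g (aH h w)). *)
Definition coupling (G H Om X Y : topologicalType)
    (mulG : G -> G -> G) (oneG : G) (mulH : H -> H -> H) (oneH : H)
    (lamG : set G -> \bar R) (lamH : set H -> \bar R)
    (mu : set Om -> \bar R) (muX : set X -> \bar R) (muY : set Y -> \bar R)
    (aG : G -> Om -> Om) (aH : H -> Om -> Om)
    (i : G * Y -> Om) (j : H * X -> Om) :=
  [/\ standard mu /\ standard muX /\ standard muY,
      (0 < muX setT < +oo)%E /\ (0 < muY setT < +oo)%E,
      [/\ (forall w, aG oneG w = w) /\ (forall w, aH oneH w = w),
          (forall g g' w, aG (mulG g g') w = aG g (aG g' w)) /\
          (forall h h' w, aH (mulH h h') w = aH h (aH h' w)),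
          (forall g h w, aG g (aH h w) = aH h (aG g w)),
          borel_map2 (fun p : (G * H) * Om => aG p.1.1 (aH p.1.2 p.2)) &
          locally_bounded (fun p : (G * H) * Om => aG p.1.1 (aH p.1.2 p.2))],
      lb_borel_iso i /\ meas_pres i lamG muY mu /\
      (exists2 N, mu_null muY N & forall y, ~ N y ->
         forall g0 g, i (mulG g0 g, y) = aG g0 (i (g, y))) &
      lb_borel_iso j /\ meas_pres j lamH muX mu /\
      (exists2 N, mu_null muX N & forall x, ~ N x ->
         forall h0 h, j (mulH h0 h, x) = aH h0 (j (h, x)))].

Definition is_cocycle (G H Om X : topologicalType)
    (mulH : H -> H -> H) (invH : H -> H)
    (muX : set X -> \bar R) (aG : G -> Om -> Om) (j : H * X -> Om)
    (aX : G -> X -> X) (w : G -> X -> H) :=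
  exists2 N, mu_null muX N & forall x, ~ N x -> forall g h,
    aG g (j (h, x)) = j (mulH h (invH (w g x)), aX g x).

(** essentially locally bounded Borel: after setting it to the identity
    outside a conull Borel set, the map is Borel and locally bounded. *)
Definition ess_lb_borel (G X H : topologicalType) (oneH : H)
    (muX : set X -> \bar R) (w : G -> X -> H) :=
  exists X1 : set X, [/\ borelS X1, muX (~` X1) = 0%E,
    borel_map2 (fun p : G * X => if pselect (X1 p.2) then w p.1 p.2 else oneH) &
    locally_bounded (fun p : G * X => if pselect (X1 p.2) then w p.1 p.2 else oneH)].

End Defs.

(** For almost every [x], the cocycle identity at [h = 1] reads
    [g.j(1, x) = j(omega(g, x)^-1, g.x)], so [omega(g, x)] is the inverse of
    the group coordinate of [j^-1 (g.j(1, x))].  This expresses the cocycle as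
    a composite of the coupling action, [j], [j^-1], a projection and the group
    inversion; all of these are Borel and map relatively compact sets to
    relatively compact sets, hence so is the cocycle once it is reset to the
    identity on the exceptional null set. *)

From mathcomp Require Import all_boot all_order all_algebra.
From mathcomp Require Import all_classical all_reals all_analysis.
Set Implicit Arguments. Unset Strict Implicit. Unset Printing Implicit Defensive.
Local Open Scope classical_set_scope.

Section generated_sigma_algebra.
Variables (T : Type) (G : set (set T)).

Lemma g_sigmaT : <<s G >> setT.
Proof.
by have := @sigma_algebraCD _ setT G set0 (@sigma_algebra0 _ setT G); rewrite setD0.
Qed.

Lemma g_sigmaC A : <<s G >> A -> <<s G >> (~` A).
Proof. by rewrite -setTD; exact: sigma_algebraCD. Qed.

Lemma g_sigmaU A B : <<s G >> A -> <<s G >> B -> <<s G >> (A `|` B).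
Proof.
by move=> GA GB; rewrite -bigcup2E; apply: sigma_algebra_bigcup => -[|[|n]] //=;
  exact: sigma_algebra0.
Qed.

Lemma g_sigmaI A B : <<s G >> A -> <<s G >> B -> <<s G >> (A `&` B).
Proof.
move=> GA GB; rewrite -[A `&` B]setCK setCI.
by apply: g_sigmaC; apply: g_sigmaU; exact: g_sigmaC.
Qed.

End generated_sigma_algebra.

Lemma g_sigma_preimage (T U : Type) (G : set (set U)) (S : set (set T))
    (f : T -> U) :
  sigma_algebra setT S -> (forall B, G B -> S (f @^-1` B)) ->
  forall B, <<s G >> B -> S (f @^-1` B).
Proof.
move=> sS GS B GB; rewrite -[f @^-1` B]setTI.
by apply: (smallest_sub (@sigma_algebra_image _ _ setT f S sS)) GB => A /GS;
  rewrite /image_set_system /= setTI.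
Qed.

Lemma continuous_borel_map (T U : topologicalType) (f : T -> U) :
  continuous f -> borel_map f.
Proof.
move=> /continuousP cf; apply: g_sigma_preimage; first exact: smallest_sigma_algebra.
by move=> B oB; apply: sub_sigma_algebra; exact: cf.
Qed.

Lemma prod_borelS_setX (T U : topologicalType) (A : set T) (B : set U) :
  borelS A -> borelS B -> prod_borelS (A `*` B).
Proof. by move=> bA bB; apply: sub_sigma_algebra; exists A, B. Qed.

Lemma prod_borelS_fst_preimage (T U : topologicalType) (A : set T) :
  borelS A -> prod_borelS (fst @^-1` A : set (T * U)).
Proof.
move=> bA; rewrite (_ : fst @^-1` A = A `*` setT); last first.
  by apply/seteqP; split => -[a b] //= [].
by apply: prod_borelS_setX => //; exact: g_sigmaT.
Qed.

Lemma prod_borelS_preimage_pair (T1 T2 U1 U2 : topologicalType)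
    (f : T1 -> U1) (g : T2 -> U2) :
  borel_map f -> borel_map g ->
  forall C, prod_borelS C -> prod_borelS ((fun p => (f p.1, g p.2)) @^-1` C).
Proof.
move=> bf bg; apply: g_sigma_preimage; first exact: smallest_sigma_algebra.
move=> _ [A [B [bA [bB ->]]]].
by apply: (@prod_borelS_setX _ _ (f @^-1` A) (g @^-1` B)); [exact: bf|exact: bg].
Qed.

Lemma borel_map_section (T1 T2 U : topologicalType) (h : T1 * T2 -> U) (c : T1) :
  borel_map2 h -> borel_map (fun x => h (c, x)).
Proof.
move=> bh B /bh; apply: (@g_sigma_preimage _ _ _ _ (pair c)).
  exact: smallest_sigma_algebra.
move=> _ [A [A' [bA [bA' ->]]]].
have [Ac|nAc] := pselect (A c).
  by rewrite (_ : _ @^-1` _ = A') //; apply/seteqP; split => x //= [].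
rewrite (_ : _ @^-1` _ = set0); first exact: sigma_algebra0.
by apply/seteqP; split => x //= [].
Qed.

Lemma borel_map2_patch (T1 T2 U : topologicalType) (M : T1 * T2 -> U)
    (X1 : set T2) (c : U) :
  borelS X1 -> borel_map2 M ->
  borel_map2 (fun p => if pselect (X1 p.2) then M p else c).
Proof.
move=> bX1 bM B bB.
have bX1c : borelS (~` X1 `&` [set _ | B c]).
  apply: g_sigmaI; first exact: g_sigmaC.
  have [Bc|nBc] := pselect (B c).
    by rewrite (_ : [set _ | B c] = setT); [exact: g_sigmaT|apply/seteqP; split].
  rewrite (_ : [set _ | B c] = set0); first exact: sigma_algebra0.
  by apply/seteqP; split.
rewrite (_ : _ @^-1` B =
  (M @^-1` B `&` (setT `*` X1)) `|` (setT `*` (~` X1 `&` [set _ | B c]))).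
  apply: g_sigmaU; last by apply: prod_borelS_setX => //; exact: g_sigmaT.
  apply: g_sigmaI; first exact: bM.
  by apply: prod_borelS_setX => //; exact: g_sigmaT.
apply/seteqP; split => -[a x] /=; case: pselect => /= X1x.
- by left.
- by right.
- by case=> [[]|[_ []]].
- by case=> [[_ []]|[_ []]].
Qed.

Lemma closed_snd_compact (T U : topologicalType) (K : set (T * U)) :
  compact K -> closed K -> closed (snd @` K).
Proof.
move=> cK clK y; rewrite closureEnbhs => ysK.
pose F := filter_from (nbhs y) (fun V => K `&` snd @^-1` V).
have FF : ProperFilter F.
  apply: filter_from_proper; last first.
    move=> V nV; have [_ [[z Kz <-] Vz]] := ysK _ _ (fun _ => id) nV.
    by exists z.
  apply: filter_from_filter; first by exists setT; exact: filterT.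
  move=> V W nV nW; exists (V `&` W); first exact: filterI.
  by move=> z [Kz [Vz Wz]].
have [p [Kp clp]] : K `&` cluster F !=set0.
  by apply: cK; exists setT; [exact: filterT|move=> z []].
(* [(p.1, y)] lies in [closure K]: a neighbourhood [W1 `*` W2] of it meets [K]
   because [p] clusters at [K `&` snd @^-1` W2]. *)
suff /clK Ky : closure K (p.1, y) by exists (p.1, y).
move=> W [[W1 W2] /= [nW1 nW2] W12W].
have [z [[Kz W2z] W1z]] : (K `&` snd @^-1` W2) `&` (fst @^-1` W1) !=set0.
  by apply: clp; [exists W2|exact: cvg_fst].
by exists z; split=> //; apply: W12W.
Qed.

Lemma precompact_snd (T U : topologicalType) (A : set (T * U)) :
  precompact A -> precompact (snd @` A).
Proof.
move=> [K AK [cK clK]]; exists (snd @` K).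
  by move=> _ [z Az <-]; exists z => //; exact: AK.
split; last exact: closed_snd_compact.
by apply: continuous_compact cK; apply: continuous_subspaceT => p; exact: cvg_snd.
Qed.

Lemma precompact_swap (T U : topologicalType) (A : set (T * U)) :
  precompact A -> precompact ((fun p : T * U => (p.2, p.1)) @` A).
Proof.
move=> [K AK [cK clK]]; exists ((fun p : T * U => (p.2, p.1)) @` K).
  by move=> _ [z Az <-]; exists z => //; exact: AK.
split; first by apply: continuous_compact cK; apply: continuous_subspaceT;
  exact: swap_continuous.
rewrite (_ : _ @` K = (fun p : U * T => (p.2, p.1)) @^-1` K); last first.
  by apply/seteqP; split => [_ [[a b] Kz <-]//|[a b] /= Kz]; exists (b, a).
by move/continuous_closedP : (@swap_continuous U T) => /(_ K clK).
Qed.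

Lemma precompact_fst (T U : topologicalType) (A : set (T * U)) :
  precompact A -> precompact (fst @` A).
Proof.
move=> /precompact_swap/precompact_snd.
congr precompact; apply/seteqP; split => [_ [_ [p Ap <-] <-]|_ [p Ap <-]].
  by exists p.
by exists (p.2, p.1) => //; exists p.
Qed.

Lemma precompact_setX (T U : topologicalType) (A : set T) (B : set U) :
  precompact A -> precompact B -> precompact (A `*` B).
Proof.
move=> [K1 AK1 [cK1 clK1]] [K2 BK2 [cK2 clK2]].
exists (K1 `*` K2); first by move=> [a b] [/= /AK1 ? /BK2 ?].
split; first exact: compact_setX.
rewrite (_ : K1 `*` K2 = fst @^-1` K1 `&` snd @^-1` K2) //.
by apply: closedI; apply: preimage_closed => // p _; [exact: cvg_fst|exact: cvg_snd].
Qed.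

Lemma precompact_setU (T : topologicalType) (A B : set T) :
  precompact A -> precompact B -> precompact (A `|` B).
Proof.
move=> [K1 AK1 [cK1 clK1]] [K2 BK2 [cK2 clK2]].
exists (K1 `|` K2); first by move=> x [/AK1|/BK2] ?; [left|right].
by split; [exact: compactU|exact: closedU].
Qed.

Lemma precompact_set1 (T : topologicalType) (x : T) :
  hausdorff_space T -> precompact [set x].
Proof. by move=> hT; apply: compact_precompact => //; exact: compact_set1. Qed.

Lemma locally_bounded_comp (T U V : topologicalType) (f : T -> U) (g : U -> V) :
  locally_bounded f -> locally_bounded g -> locally_bounded (g \o f).
Proof. by move=> lf lg A /lf /lg; rewrite image_comp. Qed.

Lemma locally_bounded_id (T : topologicalType) : locally_bounded (@id T).
Proof. by move=> A; rewrite image_id. Qed.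

Lemma continuous_locally_bounded (T U : topologicalType) (f : T -> U) :
  hausdorff_space U -> continuous f -> locally_bounded f.
Proof.
move=> hU cf A [K AK [cK _]]; apply: precompact_subset (image_subset f AK) _.
apply: compact_precompact => //; apply: continuous_compact cK.
exact: continuous_subspaceT.
Qed.

Lemma locally_bounded_pair (T1 T2 U1 U2 : topologicalType)
    (f : T1 -> U1) (g : T2 -> U2) :
  locally_bounded f -> locally_bounded g ->
  locally_bounded (fun p => (f p.1, g p.2)).
Proof.
move=> lf lg A pA.
apply: precompact_subset (precompact_setX (lf _ (precompact_fst pA))
                                          (lg _ (precompact_snd pA))).
by move=> _ [p Ap <-]; split; [exists p.1|exists p.2] => //; exists p.
Qed.

Lemma locally_bounded_pairl (T U : topologicalType) (c : T) :
  hausdorff_space T -> locally_bounded (fun x : U => (c, x)).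
Proof.
move=> hT A pA.
apply: precompact_subset (precompact_setX (precompact_set1 c hT) pA).
by move=> _ [x Ax <-].
Qed.

Lemma locally_bounded_pairr (T U : topologicalType) (c : U) :
  hausdorff_space U -> locally_bounded (fun x : T => (x, c)).
Proof.
move=> hU A pA.
apply: precompact_subset (precompact_setX pA (precompact_set1 c hU)).
by move=> _ [x Ax <-].
Qed.

Lemma locally_bounded_patch (T1 T2 U : topologicalType) (M : T1 * T2 -> U)
    (X1 : set T2) (c : U) :
  hausdorff_space U -> locally_bounded M ->
  locally_bounded (fun p => if pselect (X1 p.2) then M p else c).
Proof.
move=> hU lM A pA.
apply: precompact_subset (precompact_setU (lM _ pA) (precompact_set1 c hU)).
by move=> _ [p Ap <-]; case: pselect => X1p; [left; exists p|right].
Qed.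

Lemma borel_lb_restrict (A P Om : topologicalType) (F : P * Om -> Om)
    (emb : A -> P) :
  continuous emb -> locally_bounded emb -> borel_map2 F -> locally_bounded F ->
  borel_map2 (fun p => F (emb p.1, p.2)) /\
  locally_bounded (fun p => F (emb p.1, p.2)).
Proof.
move=> cemb lemb bF lF; split.
  move=> B /bF; apply: (prod_borelS_preimage_pair (g := @id Om)).
    exact: continuous_borel_map.
  by move=> C.
exact: locally_bounded_comp (locally_bounded_pair lemb (@locally_bounded_id _)) lF.
Qed.

Lemma ess_lb_borel_ae_eq (R : realType) (A X T : topologicalType) (oneT : T)
    (muX : set X -> \bar R) (w : A -> X -> T) (M : A * X -> T) (N : set X) :
  hausdorff_space T -> borelS N -> muX N = 0%E ->
  (forall x, ~ N x -> forall a, w a x = M (a, x)) ->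
  borel_map2 M -> locally_bounded M -> ess_lb_borel oneT muX w.
Proof.
move=> hT bN muN wM bM lM.
have wE : (fun p => if pselect ((~` N) p.2) then w p.1 p.2 else oneT) =
          (fun p => if pselect ((~` N) p.2) then M p else oneT).
  by apply/funext => -[a x] /=; case: pselect => // Nx; rewrite wM.
exists (~` N); rewrite wE; split; [exact: g_sigmaC|by rewrite setCK| |].
- exact: borel_map2_patch (g_sigmaC bN) bM.
- exact: locally_bounded_patch.
Qed.

Lemma lcsc_group_invK (T : topologicalType) (mul : T -> T -> T) (inv : T -> T)
    (one : T) :
  lcsc_group mul inv one -> involutive inv.
Proof.
case=> mulA mul1 mulV _ _ z.
rewrite -[LHS](proj2 (mul1 _)) -(proj1 (mulV z)) mulA (proj1 (mulV (inv z))).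
exact: (proj1 (mul1 z)).
Qed.

(* The paper's formula [omega(g, x) = pr_H (j^-1 (g.j(1, x)))^-1]. *)
Definition cocycle_of (T A Om X : Type) (inv : T -> T) (one : T)
    (act : A -> Om -> Om) (j : T * X -> Om) (j' : Om -> T * X) (p : A * X) : T :=
  inv (j' (act p.1 (j (one, p.2)))).1.

Section cocycle.
Variables (T A Om X : topologicalType).
Variables (mul : T -> T -> T) (inv : T -> T) (one : T).
Variables (act : A -> Om -> Om) (j : T * X -> Om) (j' : Om -> T * X).
Hypothesis (groupT : lcsc_group mul inv one).

Let actU (p : A * Om) := act p.1 p.2.
Let shift (p : A * X) := (p.1, j (one, p.2)).

Let cocycle_ofE :
  cocycle_of inv one act j j' = inv \o fst \o j' \o actU \o shift.
Proof. by []. Qed.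

Lemma cocycle_ofP (R : realType) (muX : set X -> \bar R) (aX : A -> X -> X)
    (w : A -> X -> T) :
  cancel j j' -> is_cocycle mul inv muX act j aX w ->
  exists2 N, borelS N & muX N = 0%E /\
    forall x, ~ N x -> forall a, w a x = cocycle_of inv one act j j' (a, x).
Proof.
case: groupT => _ mul1 _ _ _ jK [N [B bB [NB muB]] wN].
exists B => //; split => // x Bx a.
rewrite /cocycle_of /= (wN x (fun Nx => Bx (NB _ Nx))) jK /= (proj1 (mul1 _)).
by rewrite (lcsc_group_invK groupT).
Qed.

Lemma borel_map2_cocycle_of :
  borel_map2 j -> (forall B, prod_borelS B -> borelS (j' @^-1` B)) ->
  borel_map2 actU -> borel_map2 (cocycle_of inv one act j j').
Proof.
case: groupT => _ _ _ [_ cinv] _ bj bj' bact B bB; rewrite cocycle_ofE.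
have bC : prod_borelS (actU @^-1` (j' @^-1` (fst @^-1` (inv @^-1` B)))).
  apply: bact; apply: bj'; apply: prod_borelS_fst_preimage.
  exact: continuous_borel_map.
exact: (prod_borelS_preimage_pair (f := @id A) (fun C hC => hC)
          (borel_map_section one bj) bC).
Qed.

Lemma locally_bounded_cocycle_of :
  locally_bounded j -> locally_bounded j' -> locally_bounded actU ->
  locally_bounded (cocycle_of inv one act j j').
Proof.
case: groupT => _ _ _ [_ cinv] [hT _ _] lj lj' lact; rewrite cocycle_ofE.
have lshift : locally_bounded shift.
  exact: locally_bounded_pair (@locally_bounded_id _)
    (locally_bounded_comp (locally_bounded_pairl _ hT) lj).
have lproj : locally_bounded (fst \o j' \o actU \o shift).
  apply: locally_bounded_comp (@precompact_fst _ _).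
  exact: locally_bounded_comp (locally_bounded_comp lshift lact) lj'.
exact: locally_bounded_comp lproj (continuous_locally_bounded hT cinv).
Qed.

End cocycle.

Lemma cocycle_ess_lb_borel (R : realType) (T A Om X : topologicalType)
    (mul : T -> T -> T) (inv : T -> T) (one : T) (muX : set X -> \bar R)
    (act : A -> Om -> Om) (j : T * X -> Om) (aX : A -> X -> X) (w : A -> X -> T) :
  lcsc_group mul inv one ->
  borel_map2 (fun p => act p.1 p.2) -> locally_bounded (fun p => act p.1 p.2) ->
  lb_borel_iso j -> is_cocycle mul inv muX act j aX w -> ess_lb_borel one muX w.
Proof.
move=> groupT bact lact [j' [[jK _] bj bj' lj lj']] /(cocycle_ofP groupT jK).
have hT : hausdorff_space T by case: groupT => _ _ _ _ [].
move=> [N bN [muN wN]]; apply: ess_lb_borel_ae_eq hT bN muN wN _ _.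
- exact: borel_map2_cocycle_of groupT bj bj' bact.
- exact: locally_bounded_cocycle_of groupT lj lj' lact.
Qed.

Lemma coupling_actions (R : realType) (G H Om X Y : topologicalType)
    (mulG : G -> G -> G) (oneG : G) (mulH : H -> H -> H) (oneH : H)
    (lamG : set G -> \bar R) (lamH : set H -> \bar R)
    (mu : set Om -> \bar R) (muX : set X -> \bar R) (muY : set Y -> \bar R)
    (aG : G -> Om -> Om) (aH : H -> Om -> Om)
    (i : G * Y -> Om) (j : H * X -> Om) :
  hausdorff_space G -> hausdorff_space H ->
  coupling mulG oneG mulH oneH lamG lamH mu muX muY aG aH i j ->
  [/\ borel_map2 (fun p : G * Om => aG p.1 p.2),
      locally_bounded (fun p : G * Om => aG p.1 p.2),
      borel_map2 (fun p : H * Om => aH p.1 p.2) &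
      locally_bounded (fun p : H * Om => aH p.1 p.2)].
Proof.
move=> hG hH [_ _ [[aG1 aH1] _ _ bact lact] _ _].
have eG : (fun p : G * Om => aG p.1 (aH oneH p.2)) = (fun p => aG p.1 p.2).
  by apply/funext => p; rewrite aH1.
have eH : (fun p : H * Om => aG oneG (aH p.1 p.2)) = (fun p => aH p.1 p.2).
  by apply/funext => p; rewrite aG1.
have [bGact lGact] := borel_lb_restrict (emb := fun g => (g, oneH))
  (fun g => cvg_pair (@cvg_id _ _) (cvg_cst oneH))
  (locally_bounded_pairr _ hH) bact lact.
have [bHact lHact] := borel_lb_restrict (emb := fun h => (oneG, h))
  (fun h => cvg_pair (cvg_cst oneG) (@cvg_id _ _))
  (locally_bounded_pairl _ hG) bact lact.
by rewrite -eG -eH.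
Qed.

Theorem proposition3p9 (R : realType)
  (G H Om X Y : topologicalType)
  (mulG : G -> G -> G) (invG : G -> G) (oneG : G)
  (mulH : H -> H -> H) (invH : H -> H) (oneH : H)
  (lamG : set G -> \bar R) (lamH : set H -> \bar R)
  (mu : set Om -> \bar R) (muX : set X -> \bar R) (muY : set Y -> \bar R)
  (aG : G -> Om -> Om) (aH : H -> Om -> Om)
  (i : G * Y -> Om) (j : H * X -> Om)
  (aX : G -> X -> X) (aY : H -> Y -> Y)
  (omegaH : G -> X -> H) (omegaG : H -> Y -> G) :
  lcsc_group mulG invG oneG -> lcsc_group mulH invH oneH ->
  unimodular_haar mulG lamG -> unimodular_haar mulH lamH ->
  coupling mulG oneG mulH oneH lamG lamH mu muX muY aG aH i j ->
  is_cocycle mulH invH muX aG j aX omegaH ->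
  is_cocycle mulG invG muY aH i aY omegaG ->
  ess_lb_borel oneH muX omegaH /\ ess_lb_borel oneG muY omegaG.
Proof.
move=> groupG groupH _ _ cpl cocH cocG.
have hG : hausdorff_space G by case: groupG => _ _ _ _ [].
have hH : hausdorff_space H by case: groupH => _ _ _ _ [].
have [bGact lGact bHact lHact] := coupling_actions hG hH cpl.
case: cpl => _ _ _ [iiso _] [jiso _].
by split; [exact: cocycle_ess_lb_borel groupH bGact lGact jiso cocH
          |exact: cocycle_ess_lb_borel groupG bHact lHact iiso cocG].
Qed.
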